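(* Let $H=(W,F)$ be a connected simple undirected graph with a designated root $r_1\in W$ and a set of terminals $S=\{s_1,\dots,s_k\}\subseteq W\setminus\{r_1\}$ with $k\ge 2$, such that no edge of $H$ joins two terminals. Let $H'$, $H'_1$, $H'_2$, $M_1$, $M_2$ and $g$ be as defined in the context. Then for every set $J$ that is a basis of both $M_1$ and $M_2$, the edge set $g(J)$ is an $S$-wide spanning tree of $H$.
   Context: A spanning tree $T$ of $H$ is $S$-wide if every connected component of $T-r_1$ contains at most one terminal. $H'=(W',F')$ is obtained from $H$ by adding $k-1$ new vertices $r_2,\dots,r_k$ and, for each edge $r_1x\in F$ and each $i\in\{2,\dots,k\}$, a new edge $r_ix$. $H'_1$ is the multigraph obtained from $H'$ by identifying $r_1,\dots,r_k$ into a single vertex (keeping parallel edges), and $H'_2$ is the multigraph obtained from $H'$ by identifying $s_1,\dots,s_k$ into a single vertex (keeping parallel edges and loops); both have edge set $F'$. $M_1$ and $M_2$ are the graphic matroids of $H'_1$ and $H'_2$ on ground set $F'$. Define $f:F'\to F$ by $f(xy)=r_1y$ if $x\in\{r_1,\dots,r_k\}$, $f(xy)=xr_1$ if $y\in\{r_1,\dots,r_k\}$, and $f(xy)=xy$ otherwise; for $J\subseteq F'$, $g(J)=\{f(e):e\in J\}$. *)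

From mathcomp Require Import all_boot.
Set Implicit Arguments. Unset Strict Implicit. Unset Printing Implicit Defensive.

(* A (multi)graph is given by a finite vertex type T, a finite edge type E and
   an endpoint map ends : E -> T * T (loops and parallel edges allowed). *)

Section Graphs.
Variables (T E : finType) (ends : E -> T * T).

Definition madj (J : {set E}) : rel T :=
  fun x y => [exists e in J, (ends e == (x, y)) || (ends e == (y, x))].

(* J contains no cycle: no edge of J has its endpoints connected in J - e
   (so loops and pairs of parallel edges are cycles). *)
Definition acyclic (J : {set E}) : bool :=
  [forall e in J, ~~ connect (madj (J :\ e)) (ends e).1 (ends e).2].

Definition gindep (G J : {set E}) : bool := (J \subset G) && acyclic J.

Definition gbasis (G J : {set E}) : Prop :=
  gindep G J /\ forall J' : {set E}, J \subset J' -> gindep G J' -> J' = J.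

Definition spanning_tree (B : {set E}) : Prop :=
  acyclic B /\ forall x y, connect (madj B) x y.

End Graphs.

Section Construction.
Variables (T E : finType) (ends : E -> T * T) (r1 : T) (k : nat) (s : 'I_k -> T).

Definition incident_r1 (e : E) : bool := ((ends e).1 == r1) || ((ends e).2 == r1).
Definition other_end (e : E) : T := if (ends e).1 == r1 then (ends e).2 else (ends e).1.

(* Vertices of H' : W plus r_{j+2} = inr j for j : 'I_(k-1). *)
Definition Vp := (T + 'I_k.-1)%type.
(* Edges of H' : inl e (original edge e in F) or inr (j, e) = the copy r_{j+2} x
   of the edge e = r1 x. Only those in Fp are actual edges. *)
Definition Ep := (E + ('I_k.-1 * E))%type.

Definition Fp : {set Ep} :=
  [set x : Ep | match x with inl _ => true | inr (_, e) => incident_r1 e end].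

Definition endsHp (x : Ep) : Vp * Vp :=
  match x with
  | inl e => (inl (ends e).1, inl (ends e).2)
  | inr (j, e) => (inr j, inl (other_end e))
  end.

(* H'_1: r_1,...,r_k identified into the single vertex None *)
Definition phi1 (v : Vp) : option Vp :=
  match v with
  | inl w => if w == r1 then None else Some (inl w)
  | inr _ => None
  end.

Definition terminals : {set T} := [set s i | i : 'I_k].

(* H'_2: s_1,...,s_k identified into the single vertex None *)
Definition phi2 (v : Vp) : option Vp :=
  match v with
  | inl w => if w \in terminals then None else Some (inl w)
  | inr j => Some (inr j)
  end.

Definition ends1 (x : Ep) : option Vp * option Vp :=
  (phi1 (endsHp x).1, phi1 (endsHp x).2).
Definition ends2 (x : Ep) : option Vp * option Vp :=
  (phi2 (endsHp x).1, phi2 (endsHp x).2).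

(* f : F' -> F  (r_i x |-> r_1 x, other edges unchanged) and g *)
Definition fmap (x : Ep) : E := match x with inl e => e | inr (_, e) => e end.
Definition gmap (J : {set Ep}) : {set E} := fmap @: J.

Definition S_wide (B : {set E}) : Prop :=
  spanning_tree ends B /\
  forall i j : 'I_k, i != j ->
    ~~ connect (fun x y => [&& x != r1, y != r1 & madj ends B x y]) (s i) (s j).

End Construction.

From mathcomp Require Import all_boot.
Set Implicit Arguments. Unset Strict Implicit. Unset Printing Implicit Defensive.

(* Collapsing the roots back to r_1 sends every edge of H'_1 to the edge of H
   given by f, with the same endpoints, and conversely every edge of H is an
   edge of H'_1.  So a cycle of g(J) lifts to a cycle of J in H'_1, while
   maximality of J in M_1 makes J, hence g(J), connect all of H.  An
   s_i-s_j path of g(J) - r_1 uses only original edges of H, which lie in J;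
   once the terminals are merged in H'_2, its first edge closes a cycle of J
   with the rest of a shortest such path, contradicting independence in M_2. *)

Lemma connect_homo (V V' : finType) (e : rel V) (e' : rel V') (h : V -> V') :
  {homo h : x y / e x y >-> connect e' x y} ->
  {homo h : x y / connect e x y >-> connect e' x y}.
Proof.
move=> he x _ /connectP[p ep ->]; elim: p x ep => //= y p IHp x /andP[/he exy].
by move/IHp; apply: connect_trans.
Qed.

Section Multigraph.
Variables (T E : finType) (ends : E -> T * T).
Implicit Types (A B J : {set E}) (e x : E).

Lemma madjP A u v :
  reflect (exists2 e, e \in A & ends e = (u, v) \/ ends e = (v, u))
          (madj ends A u v).
Proof.
apply: (iffP existsP) => [[e /andP[eA /orP[]/eqP]]|[e eA [] He]].
- by exists e => //; left.
- by exists e => //; right.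
- by exists e; rewrite eA He eqxx.
- by exists e; rewrite eA He eqxx orbT.
Qed.

Lemma madj_sym A : symmetric (madj ends A).
Proof.
by move=> u v; apply/madjP/madjP => -[e eA He]; exists e => //; case: He; auto.
Qed.

Lemma connect_madj_sym A : connect_sym (madj ends A).
Proof. exact/sym_connect_sym/madj_sym. Qed.

Lemma madj_ends A e : e \in A -> madj ends A (ends e).1 (ends e).2.
Proof. by move=> eA; apply/madjP; exists e => //; left; case: (ends e). Qed.

Lemma connect_madj_subset A B : A \subset B ->
  subrel (connect (madj ends A)) (connect (madj ends B)).
Proof.
move=> AB; apply: connect_sub => u v /madjP[e eA He].
by apply/connect1/madjP; exists e => //; apply: (subsetP AB).
Qed.

Lemma acyclic_edge J e : acyclic ends J -> e \in J ->
  ~~ connect (madj ends (J :\ e)) (ends e).1 (ends e).2.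
Proof. by move=> /forallP/(_ e)/implyP. Qed.

Definition reaches_edge A x w : bool :=
  connect (madj ends A) w (ends x).1 || connect (madj ends A) w (ends x).2.

Lemma connect_madjU1 A x u v : connect (madj ends (x |: A)) u v ->
  connect (madj ends A) u v || reaches_edge A x u && reaches_edge A x v.
Proof.
pose a := [pred w | connect (madj ends A) u w
                    || reaches_edge A x u && reaches_edge A x w].
have a_closed : closed (madj ends (x |: A)) a.
  apply: intro_closed; first exact: connect_madj_sym.
  move=> y z; rewrite !inE => /madjP[e]; rewrite in_setU1 => /orP[/eqP-> Hx | eA He].
    have [Ry Rz] : reaches_edge A x y /\ reaches_edge A x z.
      by rewrite /reaches_edge; case: Hx => ->; rewrite !connect0 ?orbT.
    case/orP=> [Cy|/andP[-> _]]; last by rewrite Rz orbT.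
    apply/orP; right; rewrite Rz andbT /reaches_edge.
    by case/orP: Ry => /(connect_trans Cy) ->; rewrite ?orbT.
  have Ayz : madj ends A y z by apply/madjP; exists e.
  have Azy : connect (madj ends A) z y by rewrite connect_madj_sym connect1.
  case/orP=> [Cy|/andP[-> Ry]]; first by rewrite (connect_trans Cy (connect1 Ayz)).
  apply/orP; right; rewrite /reaches_edge.
  by case/orP: Ry => /(connect_trans Azy) ->; rewrite ?orbT.
by move/(closed_connect a_closed); rewrite !inE connect0 => <-.
Qed.

Lemma acyclicU1 J x : acyclic ends J -> x \notin J ->
  ~~ connect (madj ends J) (ends x).1 (ends x).2 -> acyclic ends (x |: J).
Proof.
move=> aJ xJ nCx; apply/forallP => e; apply/implyP; rewrite in_setU1.
case: (eqVneq e x) => [->|nex] /= eJ; first by rewrite setU1K.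
have nCe := acyclic_edge aJ eJ.
have -> : (x |: J) :\ e = x |: (J :\ e).
  by apply/setP => z; rewrite !inE; case: (eqVneq z x) => // ->; rewrite eq_sym nex.
apply/negP => /connect_madjU1; rewrite (negbTE nCe) /= => /andP[].
have via_e a b : connect (madj ends (J :\ e)) (ends e).1 a ->
    connect (madj ends (J :\ e)) (ends e).2 b -> connect (madj ends J) a b.
  have J'J := connect_madj_subset (subsetDl J [set e]).
  move=> /J'J; rewrite connect_madj_sym => C1 /J'J C2.
  by rewrite (connect_trans C1) // (connect_trans _ C2) // connect1 ?madj_ends.
rewrite /reaches_edge => /orP[] C1 /orP[] C2.
- by move: nCe; rewrite (connect_trans C1) // connect_madj_sym.
- by rewrite (via_e _ _ C1 C2) in nCx.
- by rewrite connect_madj_sym (via_e _ _ C1 C2) in nCx.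
- by move: nCe; rewrite (connect_trans C1) // connect_madj_sym.
Qed.

Lemma gbasis_connect_ends G J x : gbasis ends G J -> x \in G ->
  connect (madj ends J) (ends x).1 (ends x).2.
Proof.
move=> [/andP[JG aJ] maxJ] xG; have [xJ|xJ] := boolP (x \in J).
  by rewrite connect1 ?madj_ends.
apply/negPn/negP => nCx.
have eqJ : x |: J = J.
  by apply: maxJ; rewrite ?subsetUr // /gindep subUset sub1set xG JG acyclicU1.
by rewrite -eqJ setU11 in xJ.
Qed.

End Multigraph.

Lemma connect_madj_map (T E T' E' : finType) (ends : E -> T * T)
    (ends' : E' -> T' * T') (h : T -> T') (A : {set E}) (A' : {set E'}) :
  (forall e, e \in A -> madj ends' A' (h (ends e).1) (h (ends e).2)) ->
  {homo h : u v / connect (madj ends A) u v >-> connect (madj ends' A') u v}.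
Proof.
move=> hA; apply: connect_homo => u v /madjP[e /hA He [] Euv];
  by rewrite Euv /= in He; rewrite connect1 // madj_sym.
Qed.

Section Construction.
Variables (T E : finType) (ends : E -> T * T) (r1 : T) (k : nat) (s : 'I_k -> T).
Implicit Types (J : {set Ep E k}) (x : Ep E k).

Local Notation endsH1 := (@ends1 T E ends r1 k).
Local Notation endsH2 := (@ends2 T E ends r1 k s).

Definition lift1 (w : T) : option (Vp T k) := phi1 r1 (inl w).
Definition lift2 (w : T) : option (Vp T k) := phi2 s (inl w).
Definition unlift1 (a : option (Vp T k)) : T := if a is Some (inl w) then w else r1.

Lemma lift1K : cancel lift1 unlift1.
Proof. by move=> w; rewrite /lift1 /=; case: eqP. Qed.

Lemma lift2_terminal i : lift2 (s i) = None.
Proof. by rewrite /lift2 /= imset_f. Qed.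

Lemma ends1_inl e : endsH1 (inl e) = (lift1 (ends e).1, lift1 (ends e).2).
Proof. by []. Qed.

Lemma ends2_inl e : endsH2 (inl e) = (lift2 (ends e).1, lift2 (ends e).2).
Proof. by []. Qed.

Lemma ends1_Fp x : x \in Fp ends r1 k ->
  endsH1 x = (lift1 (ends (fmap x)).1, lift1 (ends (fmap x)).2) \/
  endsH1 x = (lift1 (ends (fmap x)).2, lift1 (ends (fmap x)).1).
Proof.
case: x => [e|[j e]]; first by left.
rewrite inE /incident_r1 /ends1 /= /other_end /lift1 /=.
case: (ends e) => a b /=; have [_ _|/negbTE-> /eqP->] := eqVneq a r1.
  by left.
by rewrite eqxx; right.
Qed.

Lemma gmap_inl J e : J \subset Fp ends r1 k -> e \in gmap J ->
  (ends e).1 != r1 -> (ends e).2 != r1 -> inl e \in J.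
Proof.
move=> JF /imsetP[[e'|[j e']] xJ ->] //= ne1 ne2.
by have := subsetP JF _ xJ; rewrite inE /incident_r1 (negbTE ne1) (negbTE ne2).
Qed.

Lemma gmap_acyclic J : J \subset Fp ends r1 k ->
  acyclic endsH1 J -> acyclic ends (gmap J).
Proof.
move=> JF aJ; apply/forallP => e0; apply/implyP => /imsetP[x xJ {e0}->].
have := acyclic_edge aJ xJ; apply: contra => C.
suff C1 : connect (madj endsH1 (J :\ x))
    (lift1 (ends (fmap x)).1) (lift1 (ends (fmap x)).2).
  by case: (ends1_Fp (subsetP JF _ xJ)) => ->; rewrite // connect_madj_sym.
apply: connect_madj_map C => e; rewrite in_setD1 => /andP[ne /imsetP[y yJ Ey]].
apply/madjP; exists y.
  by rewrite in_setD1 yJ andbT; apply: contraNneq ne => yx; rewrite Ey yx.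
by rewrite Ey; case: (ends1_Fp (subsetP JF _ yJ)) => ->; auto.
Qed.

Lemma gmap_connected J : gbasis endsH1 (Fp ends r1 k) J ->
  (forall u v, connect (madj ends setT) u v) ->
  forall u v, connect (madj ends (gmap J)) u v.
Proof.
move=> B1 Hconn u v; have [/andP[JF _] _] := B1.
rewrite -(lift1K u) -(lift1K v); apply: (connect_madj_map (ends := endsH1) (A := J)).
  move=> x xJ; apply/madjP; exists (fmap x); first exact: imset_f.
  by case: (ends1_Fp (subsetP JF _ xJ)) => -> /=; rewrite !lift1K;
    case: (ends (fmap x)); auto.
have CFp : connect (madj endsH1 (Fp ends r1 k)) (lift1 u) (lift1 v).
  apply: connect_madj_map (Hconn u v) => e _.
  by apply/madjP; exists (inl e); [rewrite inE | left; rewrite ends1_inl].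
apply: connect_sub CFp => a b /madjP[x xF [] [<- <-]].
  exact: gbasis_connect_ends B1 xF.
by rewrite connect_madj_sym; exact: gbasis_connect_ends B1 xF.
Qed.

Lemma gmap_separates_terminals J : injective s ->
  gindep endsH2 (Fp ends r1 k) J ->
  forall i j : 'I_k, i != j ->
    ~~ connect (fun u v => [&& u != r1, v != r1 & madj ends (gmap J) u v]) (s i) (s j).
Proof.
move=> s_inj /andP[JF aJ] i j nij; apply/negP => /connectP[p pth].
case: (shortenP pth) => {p pth}[[|x1 q]] /= pth uniq_p _ Elast.
  by move/s_inj: Elast nij => ->; rewrite eqxx.
case/andP: pth => /and3P[si_r1 x1_r1 /madjP[e1 e1J He1]] pth.
have [e1_r1 e1_r1'] : (ends e1).1 != r1 /\ (ends e1).2 != r1 by case: He1 => ->.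
have ie1 := gmap_inl JF e1J e1_r1 e1_r1'.
have si_e1 : s i \in [:: (ends e1).1; (ends e1).2].
  by case: He1 => ->; rewrite !inE eqxx ?orbT.
case/andP: uniq_p => si_notin _.
pose R u v := [&& u != s i, v != s i, u != r1, v != r1 & madj ends (gmap J) u v].
have Rpath : path R x1 q.
  apply: (sub_in_path (P := predC1 (s i))) pth.
    by move=> u v /= si_u si_v /and3P[*]; apply/and5P.
  by apply/allP => u u_in /=; apply: contraNneq si_notin => <-.
have Cx1 : connect (madj endsH2 (J :\ inl e1)) (lift2 x1) (lift2 (s j)).
  rewrite Elast; apply: connect_homo (path_connect Rpath (mem_last x1 q)).
  move=> u v /and5P[u_si v_si u_r1 v_r1 /madjP[e eJ He]]; apply/connect1/madjP.
  have [e_r1 e_r1'] : (ends e).1 != r1 /\ (ends e).2 != r1 by case: He => ->.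
  exists (inl e); last by rewrite ends2_inl; case: He => ->; auto.
  rewrite in_setD1 (gmap_inl JF eJ e_r1 e_r1') andbT.
  apply: contraTneq si_e1 => -[<-].
  by case: He => ->; rewrite !inE !(eq_sym (s i)) (negbTE u_si) (negbTE v_si).
rewrite lift2_terminal in Cx1; have := acyclic_edge aJ ie1.
rewrite ends2_inl; case: He1 => -> /=; rewrite lift2_terminal ?Cx1 //.
by rewrite connect_madj_sym Cx1.
Qed.

End Construction.

Theorem lemma7 (T E : finType) (ends : E -> T * T) (r1 : T) (k : nat)
    (s : 'I_k -> T) :
  (* H is a simple graph *)
  (forall e, (ends e).1 != (ends e).2) ->
  (forall e e', ends e' = ends e \/ ends e' = ((ends e).2, (ends e).1) -> e = e') ->
  (* H is connected *)
  (forall x y, connect (madj ends setT) x y) ->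
  (* terminals: k >= 2 distinct vertices, different from r1, pairwise nonadjacent *)
  2 <= k ->
  injective s ->
  (forall i, s i != r1) ->
  (forall e, ~~ (((ends e).1 \in terminals s) && ((ends e).2 \in terminals s))) ->
  forall J : {set Ep E k},
    gbasis (@ends1 T E ends r1 k) (Fp ends r1 k) J ->
    gbasis (@ends2 T E ends r1 k s) (Fp ends r1 k) J ->
    S_wide ends r1 s (gmap J).
Proof.
move=> _ _ H_conn _ s_inj _ _ J B1 [indep2 _].
have [/andP[JF acyclic1] _] := B1.
split; last exact: gmap_separates_terminals s_inj indep2.
split; [exact: gmap_acyclic JF acyclic1 | exact: gmap_connected B1 H_conn].
Qed.
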